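(* Consider $k\ge 2$ arms. For each arm $j$, $n_j\ge 1$ samples with values in $[0,1]$ have been observed, with sample mean $\overline X_j^{n_j}\in[0,1]$. Let $\alpha$ be an arm with the largest sample mean and $\beta$ an arm with the second largest sample mean, i.e. $\overline X_\alpha^{n_\alpha}\ge \overline X_\beta^{n_\beta}\ge \overline X_j^{n_j}$ for all $j\ne\alpha$. Fix an integer $N\ge 1$ and an arm $i$, and let $Y_1,\dots,Y_N$ be random variables with values in $[0,1]$ (the next $N$ samples of arm $i$). Define the updated sample mean of arm $i$ as $$\overline X_i^{n_i+N}=\frac{n_i\overline X_i^{n_i}+\sum_{t=1}^N Y_t}{n_i+N},$$ while the sample means of all other arms are unchanged. Let $\Lambda_i^b$ be the blinkered intrinsic value of information of testing arm $i$ $N$ times (defined in the context). Then $$\Lambda_\alpha^b\le \frac{N\,\overline X_\beta^{n_\beta}}{n_\alpha}\,\Pr\!\left(\overline X_\alpha^{n_\alpha+N}\le \overline X_\beta^{n_\beta}\right),$$ and for every $i\ne\alpha$, $$\Lambda_i^b\le \frac{N\,(1-\overline X_\alpha^{n_\alpha})}{n_i}\,\Pr\!\left(\overline X_i^{n_i+N}\ge \overline X_\alpha^{n_\alpha}\right).$$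
   Context: Setting: a selection problem among arms, where samples of each arm take values in $[0,1]$ and the estimated value of an arm is its sample mean; after sampling stops, the arm with the greatest sample mean is selected. Currently the selected arm is $\alpha$. For a test consisting of $N$ additional samples of arm $i$, let $m_j'$ denote the sample mean of arm $j$ after the test (so $m_i'=\overline X_i^{n_i+N}$ and $m_j'=\overline X_j^{n_j}$ for $j\ne i$). The blinkered intrinsic value of information is the expected improvement, measured by the updated estimates, of the best arm after the test over the currently selected arm $\alpha$: $$\Lambda_i^b=\mathbb E\!\left[\max_j m_j' - m_\alpha'\right].$$ In particular $\Lambda_\alpha^b=\mathbb E[(\overline X_\beta^{n_\beta}-\overline X_\alpha^{n_\alpha+N})^+]$ and, for $i\ne\alpha$, $\Lambda_i^b=\mathbb E[(\overline X_i^{n_i+N}-\overline X_\alpha^{n_\alpha})^+]$. Probabilities and expectations are over the random future samples $Y_1,\dots,Y_N$. *)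

(* A general probability space is encoded
   from scratch (sigma-algebra + countably additive probability), and the
   expectation of a bounded function is the supremum of the integrals of
   simple functions lying below it (= Lebesgue integral for bounded
   measurable functions). *)
From Stdlib Require Import Reals Lra List Classical ClassicalEpsilon.
Open Scope R_scope.

Record prob_space (Omega : Type) := {
  measurable : (Omega -> Prop) -> Prop;
  Prob : (Omega -> Prop) -> R;
  meas_full : measurable (fun _ => True);
  meas_compl : forall A, measurable A -> measurable (fun w => ~ A w);
  meas_countable_union : forall A : nat -> Omega -> Prop,
      (forall n, measurable (A n)) -> measurable (fun w => exists n, A n w);
  Prob_nonneg : forall A, measurable A -> 0 <= Prob A;
  Prob_full : Prob (fun _ => True) = 1;
  Prob_sigma_additive : forall A : nat -> Omega -> Prop,
      (forall n, measurable (A n)) ->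
      (forall i j w, i <> j -> A i w -> A j w -> False) ->
      infinite_sum (fun n => Prob (A n)) (Prob (fun w => exists n, A n w))
}.
Arguments measurable {Omega}.
Arguments Prob {Omega}.

Definition indic {Omega : Type} (A : Omega -> Prop) (w : Omega) : R :=
  if excluded_middle_informative (A w) then 1 else 0.

Definition simple_eval {Omega : Type} (s : list (R * (Omega -> Prop))) (w : Omega) : R :=
  fold_right Rplus 0 (map (fun p => fst p * indic (snd p) w) s).

Definition simple_integral {Omega : Type} (P : prob_space Omega)
  (s : list (R * (Omega -> Prop))) : R :=
  fold_right Rplus 0 (map (fun p => fst p * Prob P (snd p)) s).

Definition lower_integrals {Omega : Type} (P : prob_space Omega) (f : Omega -> R) (x : R) : Prop :=
  exists s : list (R * (Omega -> Prop)),
    Forall (fun p => measurable P (snd p)) s /\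
    (forall w, simple_eval s w <= f w) /\
    x = simple_integral P s.

Definition Expect {Omega : Type} (P : prob_space Omega) (f : Omega -> R) : R :=
  match excluded_middle_informative
          (bound (lower_integrals P f) /\ exists x, lower_integrals P f x) with
  | left H => proj1_sig (completeness _ (proj1 H) (proj2 H))
  | right _ => 0
  end.

Definition Pr {Omega : Type} (P : prob_space Omega) (A : Omega -> Prop) : R :=
  Expect P (indic A).

Definition measurable_fun {Omega : Type} (P : prob_space Omega) (X : Omega -> R) : Prop :=
  forall a : R, measurable P (fun w => X w <= a).

(* updated sample mean of arm i after N further samples Y 0 .. Y (N-1) *)
Definition updated_mean {Omega : Type} (ni N : nat) (xi : R) (Y : nat -> Omega -> R)
  (w : Omega) : R :=
  (INR ni * xi + fold_right Rplus 0 (map (fun t => Y t w) (seq 0 N))) / INR (ni + N).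

Definition post_mean {Omega : Type} (n : nat -> nat) (xbar : nat -> R)
  (i N : nat) (Y : nat -> Omega -> R) (j : nat) (w : Omega) : R :=
  if Nat.eq_dec j i then updated_mean (n i) N (xbar i) Y w else xbar j.

(* blinkered intrinsic value of information of testing arm i N times,
   arms indexed 0..k-1, alpha the currently selected arm:
   Lambda_i^b = E[ max_j m'_j - m'_alpha ] *)
Definition blinkered_VOI {Omega : Type} (P : prob_space Omega) (k : nat)
  (n : nat -> nat) (xbar : nat -> R) (alpha i N : nat) (Y : nat -> Omega -> R) : R :=
  Expect P (fun w =>
    fold_right Rmax (post_mean n xbar i N Y alpha w)
      (map (fun j => post_mean n xbar i N Y j w) (seq 0 k))
    - post_mean n xbar i N Y alpha w).

From Stdlib Require Import Reals List.
From Stdlib Require Import Lra Psatz Classical ClassicalEpsilon FunctionalExtensionality PropExtensionality.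
Open Scope R_scope.

(* After testing arm i, the improvement of the best updated mean
   over the updated mean of alpha is  max(u, v) - u  for two competitors u, v:
   for i = alpha, u is the updated mean of alpha and v = xbar_beta; for
   i <> alpha, u = xbar_alpha and v is the updated mean of arm i.  This
   quantity vanishes unless u <= v, and elementary algebra on the updated mean
   bounds the jump v - u by the constant c of the theorem, so pointwise
     improvement <= c * 1_{u <= v}.
   The theorem follows from one fact about the expectation (a
   supremum of integrals of simple functions):  f <= c * 1_A  implies
   E f <= c * Pr A. *)

Lemma pred_ext {O : Type} (A B : O -> Prop) : (forall w, A w <-> B w) -> A = B.
Proof.
  intro H. apply functional_extensionality; intro w.
  apply propositional_extensionality; auto.
Qed.

Lemma indic_in {O : Type} (A : O -> Prop) w : A w -> indic A w = 1.
Proof. unfold indic; destruct excluded_middle_informative; tauto. Qed.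

Lemma indic_out {O : Type} (A : O -> Prop) w : ~ A w -> indic A w = 0.
Proof. unfold indic; destruct excluded_middle_informative; tauto. Qed.

Lemma indic_range {O : Type} (A : O -> Prop) w : 0 <= indic A w <= 1.
Proof. unfold indic; destruct excluded_middle_informative; lra. Qed.

Section ProbabilitySpace.
Variable Omega : Type.
Variable P : prob_space Omega.

Lemma meas_empty : measurable P (fun _ => False).
Proof.
  replace (fun _ : Omega => False) with (fun w : Omega => ~ True).
  - apply meas_compl, meas_full.
  - apply pred_ext; tauto.
Qed.

Lemma meas_union (A B : Omega -> Prop) : measurable P A -> measurable P B ->
  measurable P (fun w => A w \/ B w).
Proof.
  intros HA HB.
  replace (fun w => A w \/ B w) with
    (fun w => exists m, (match m with 0%nat => A | _ => B end) w).
  - apply meas_countable_union. intros [|m]; auto.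
  - apply pred_ext; intro w; split.
    + intros [[|m] H]; auto.
    + intros [H|H]; [exists 0%nat | exists 1%nat]; auto.
Qed.

Lemma meas_inter (A B : Omega -> Prop) : measurable P A -> measurable P B ->
  measurable P (fun w => A w /\ B w).
Proof.
  intros HA HB.
  replace (fun w => A w /\ B w) with (fun w => ~ ((fun w => ~ A w) w \/ (fun w => ~ B w) w)).
  - apply meas_compl, meas_union; apply meas_compl; auto.
  - apply pred_ext; intro w; simpl; tauto.
Qed.

Lemma meas_diff (A B : Omega -> Prop) : measurable P A -> measurable P B ->
  measurable P (fun w => A w /\ ~ B w).
Proof. intros; apply meas_inter; auto using meas_compl. Qed.

Lemma Prob_empty : Prob P (fun _ => False) = 0.
Proof.
  pose proof (Prob_sigma_additive _ P (fun _ _ => False)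
                (fun _ => meas_empty) (fun _ _ _ _ f _ => f)) as Hsum.
  cbv beta in Hsum.
  replace (fun w : Omega => exists _ : nat, False) with (fun _ : Omega => False) in Hsum
    by (apply pred_ext; intro; split; [tauto | intros [_ []]]).
  set (p := Prob P (fun _ => False)) in *.
  assert (Hp : 0 <= p) by apply Prob_nonneg, meas_empty.
  (* the partial sums (m+1) p converge to p, which forces p = 0 *)
  destruct (Req_dec p 0) as [|Hne]; auto. exfalso.
  destruct (Hsum (p / 2)) as [M HM]; [lra|].
  pose proof (HM M (Nat.le_refl _)) as H1.
  pose proof (HM (S M) (Nat.le_succ_diag_r _)) as H2.
  unfold R_dist in *. simpl in H2.
  apply Rabs_def2 in H1. apply Rabs_def2 in H2. lra.
Qed.

Lemma Prob_add (A B : Omega -> Prop) : measurable P A -> measurable P B ->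
  (forall w, A w -> B w -> False) ->
  Prob P (fun w => A w \/ B w) = Prob P A + Prob P B.
Proof.
  intros HA HB Hdisj.
  set (F := fun m : nat => match m with 0%nat => A | 1%nat => B | _ => fun _ => False end).
  assert (HF : forall m, measurable P (F m)) by (intros [|[|m]]; simpl; auto using meas_empty).
  assert (HFdisj : forall i j w, i <> j -> F i w -> F j w -> False)
    by (intros [|[|i]] [|[|j]] w Hij; simpl; try tauto; intros; eauto).
  pose proof (Prob_sigma_additive _ P F HF HFdisj) as Hsum.
  replace (fun w => exists m, F m w) with (fun w => A w \/ B w) in Hsum.
  2:{ apply pred_ext; intro w; split.
      - intros [h|h]; [exists 0%nat | exists 1%nat]; auto.
      - intros [[|[|m]] Hm]; simpl in Hm; tauto. }
  apply (uniqueness_sum _ _ _ Hsum).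
  (* the partial sums are constant from index 1 on *)
  intros eps Heps. exists 1%nat. intros m Hm.
  assert (Hpartial : sum_f_R0 (fun m => Prob P (F m)) m = Prob P A + Prob P B).
  { induction m as [|m IH]; [lia|].
    destruct m as [|m]; [reflexivity|].
    simpl sum_f_R0 in *. rewrite IH by lia. simpl. rewrite Prob_empty. ring. }
  rewrite Hpartial. unfold R_dist. rewrite Rminus_diag, Rabs_R0. auto.
Qed.

Lemma Prob_split (X S : Omega -> Prop) : measurable P X -> measurable P S ->
  Prob P X = Prob P (fun w => X w /\ S w) + Prob P (fun w => X w /\ ~ S w).
Proof.
  intros HX HS. rewrite <- Prob_add by (auto using meas_inter, meas_diff; intros w; tauto).
  f_equal. apply pred_ext; intro w. pose proof (classic (S w)); tauto.
Qed.

Definition restricted_integral (s : list (R * (Omega -> Prop))) (B : Omega -> Prop) : R :=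
  fold_right Rplus 0 (map (fun p => fst p * Prob P (fun w => snd p w /\ B w)) s).

Lemma restricted_integral_full s :
  restricted_integral s (fun _ => True) = simple_integral P s.
Proof.
  unfold restricted_integral, simple_integral. f_equal. apply map_ext. intros [c T]. simpl.
  do 2 f_equal. apply pred_ext; intro; tauto.
Qed.

Lemma restricted_integral_split s B S :
  Forall (fun p => measurable P (snd p)) s -> measurable P B -> measurable P S ->
  restricted_integral s B =
  restricted_integral s (fun w => B w /\ S w) + restricted_integral s (fun w => B w /\ ~ S w).
Proof.
  intros Hs HB HS. induction Hs as [|[c T] s HT Hs IH]; unfold restricted_integral in *; simpl.
  - ring.
  - rewrite IH, (Prob_split (fun w => T w /\ B w) S) by (simpl in HT; auto using meas_inter).
    replace (fun w => (T w /\ B w) /\ S w) with (fun w => T w /\ B w /\ S w)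
      by (apply pred_ext; intro; tauto).
    replace (fun w => (T w /\ B w) /\ ~ S w) with (fun w => T w /\ B w /\ ~ S w)
      by (apply pred_ext; intro; tauto).
    ring.
Qed.

(* The induction peels off one step  a 1_S  and splits B along S. *)
Lemma restricted_integral_le s :
  Forall (fun p => measurable P (snd p)) s ->
  forall B d, measurable P B -> (forall w, B w -> simple_eval s w <= d) ->
  restricted_integral s B <= d * Prob P B.
Proof.
  intro Hs. induction Hs as [|[a S] s HS Hs IH]; intros B d HB Hle.
  - unfold restricted_integral; simpl.
    destruct (classic (exists w, B w)) as [[w Hw]|Hempty].
    + specialize (Hle w Hw). unfold simple_eval in Hle; simpl in Hle.
      pose proof (Prob_nonneg _ P B HB). nra.
    + replace B with (fun _ : Omega => False) by (apply pred_ext; firstorder).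
      rewrite Prob_empty; lra.
  - simpl in HS.
    assert (Heval : forall w, simple_eval ((a, S) :: s) w = a * indic S w + simple_eval s w)
      by reflexivity.
    assert (Hin : restricted_integral s (fun w => B w /\ S w) <= (d - a) * Prob P (fun w => B w /\ S w)).
    { apply IH; auto using meas_inter. intros w [Hw HSw].
      specialize (Hle w Hw). rewrite Heval, indic_in in Hle by exact HSw. lra. }
    assert (Hout : restricted_integral s (fun w => B w /\ ~ S w) <= d * Prob P (fun w => B w /\ ~ S w)).
    { apply IH; auto using meas_diff. intros w [Hw HSw].
      specialize (Hle w Hw). rewrite Heval, indic_out in Hle by exact HSw. lra. }
    change (restricted_integral ((a, S) :: s) B)
      with (a * Prob P (fun w => S w /\ B w) + restricted_integral s B).
    rewrite (restricted_integral_split s B S), (Prob_split B S) by auto.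
    replace (fun w => S w /\ B w) with (fun w => B w /\ S w) by (apply pred_ext; intro; tauto).
    lra.
Qed.

Lemma simple_integral_le s d :
  Forall (fun p => measurable P (snd p)) s -> (forall w, simple_eval s w <= d) ->
  simple_integral P s <= d.
Proof.
  intros Hs Hle. rewrite <- restricted_integral_full.
  replace d with (d * Prob P (fun _ => True)) by (rewrite (Prob_full _ P); ring).
  apply restricted_integral_le; auto using meas_full.
Qed.

Lemma lower_integrals_le f d x :
  (forall w, f w <= d) -> lower_integrals P f x -> x <= d.
Proof.
  intros Hf [s [Hs [Hsf ->]]]. apply simple_integral_le; auto.
  intro w; eapply Rle_trans; eauto.
Qed.

Lemma lower_integrals_mono f g x :
  (forall w, f w <= g w) -> lower_integrals P f x -> lower_integrals P g x.
Proof.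
  intros Hfg [s [Hs [Hsf ->]]]. exists s; repeat split; auto.
  intro w; eapply Rle_trans; eauto.
Qed.

Lemma lower_integrals_scale f c x : 0 < c ->
  lower_integrals P f x -> lower_integrals P (fun w => f w / c) (x / c).
Proof.
  intros Hc [s [Hs [Hsf ->]]].
  exists (map (fun p => (fst p / c, snd p)) s). repeat split.
  - rewrite Forall_forall in *. intros p Hp. apply in_map_iff in Hp.
    destruct Hp as [q [<- Hq]]. exact (Hs q Hq).
  - intro w. specialize (Hsf w).
    replace (simple_eval (map (fun p => (fst p / c, snd p)) s) w) with (simple_eval s w / c).
    + apply Rmult_le_compat_r; [apply Rlt_le, Rinv_0_lt_compat|]; lra.
    + unfold simple_eval. clear Hs Hsf. induction s as [|[a T] s IH]; simpl.
      * field; lra.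
      * rewrite <- IH. field; lra.
  - unfold simple_integral. clear Hs Hsf. induction s as [|[a T] s IH]; simpl.
    + field; lra.
    + rewrite <- IH. field; lra.
Qed.

Lemma Expect_le f b :
  (forall x, lower_integrals P f x -> x <= b) -> 0 <= b -> Expect P f <= b.
Proof.
  intros Hb Hb0. unfold Expect.
  destruct excluded_middle_informative as [H|H]; auto.
  destruct (completeness _ _ _) as [m [Hub Hlub]]. simpl. apply Hlub. exact Hb.
Qed.

Lemma Expect_ge f x :
  bound (lower_integrals P f) -> lower_integrals P f x -> x <= Expect P f.
Proof.
  intros Hb Hx. unfold Expect.
  destruct excluded_middle_informative as [H|H].
  - destruct (completeness _ _ _) as [m [Hub Hlub]]. simpl. apply Hub; auto.
  - exfalso; apply H; split; eauto.
Qed.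

Lemma indic_lower_integrals_bounded A : bound (lower_integrals P (indic A)).
Proof.
  exists 1. intros x Hx. apply (lower_integrals_le (indic A)); auto.
  intro w; apply indic_range.
Qed.

Lemma Expect_le_mult_Pr f A c :
  0 <= c -> (forall w, f w <= c * indic A w) -> Expect P f <= c * Pr P A.
Proof.
  intros Hc Hf.
  assert (HPr : 0 <= Pr P A).
  { apply Expect_ge; [apply indic_lower_integrals_bounded|].
    exists nil. repeat split; [constructor|]. intro w.
    unfold simple_eval; simpl. apply indic_range. }
  apply Expect_le; [|nra]. intros x Hx.
  destruct (Req_dec c 0) as [->|Hc0].
  - rewrite Rmult_0_l. apply (lower_integrals_le f); auto.
    intro w; specialize (Hf w); lra.
  - (* x / c is a lower integral of f / c <= 1_A, hence at most Pr(A) *)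
    assert (Hxc : x / c <= Pr P A).
    { apply Expect_ge; [apply indic_lower_integrals_bounded|].
      apply (lower_integrals_mono (fun w => f w / c)); [|apply lower_integrals_scale; auto; lra].
      intro w. specialize (Hf w). apply (Rmult_le_reg_l c); [lra|].
      replace (c * (f w / c)) with (f w) by (field; auto). exact Hf. }
    replace x with (c * (x / c)) by (field; auto).
    apply Rmult_le_compat_l; lra.
Qed.

End ProbabilitySpace.

Lemma updated_mean_drop n N xa xb S :
  1 <= n -> 0 <= N -> xb <= xa -> 0 <= xb -> 0 <= S ->
  xb - (n * xa + S) / (n + N) <= N * xb / n.
Proof.
  intros Hn HN Hab Hb HS.
  assert (E : xb - (n * xa + S) / (n + N) = (n * (xb - xa) + N * xb - S) / (n + N))
    by (field; lra).
  rewrite E. apply Rle_trans with (N * xb / (n + N)).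
  - unfold Rdiv. apply Rmult_le_compat_r; [apply Rlt_le, Rinv_0_lt_compat; lra|nra].
  - unfold Rdiv. apply Rmult_le_compat_l; [nra|]. apply Rinv_le_contravar; lra.
Qed.

Lemma updated_mean_rise n N xa xi S :
  1 <= n -> 0 <= N -> xi <= xa -> xa <= 1 -> S <= N ->
  (n * xi + S) / (n + N) - xa <= N * (1 - xa) / n.
Proof.
  intros Hn HN Hia Ha HS.
  assert (E : (n * xi + S) / (n + N) - xa = (n * (xi - xa) + (S - N * xa)) / (n + N))
    by (field; lra).
  rewrite E. apply Rle_trans with (N * (1 - xa) / (n + N)).
  - unfold Rdiv. apply Rmult_le_compat_r; [apply Rlt_le, Rinv_0_lt_compat; lra|nra].
  - unfold Rdiv. apply Rmult_le_compat_l; [nra|]. apply Rinv_le_contravar; lra.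
Qed.

Lemma bound_nonneg n N d : 1 <= n -> 0 <= N -> 0 <= d -> 0 <= N * d / n.
Proof.
  intros Hn HN Hd. apply Rmult_le_pos; [apply Rmult_le_pos; lra|].
  apply Rlt_le, Rinv_0_lt_compat; lra.
Qed.

Lemma sum_unit_interval {T : Type} (F : T -> R) (l : list T) :
  (forall t, In t l -> 0 <= F t <= 1) ->
  0 <= fold_right Rplus 0 (map F l) <= INR (length l).
Proof.
  induction l as [|t l IH]; intro H; cbn [map fold_right length]; [simpl; lra|].
  assert (Ht := H t (or_introl eq_refl)).
  assert (Hl := IH (fun u Hu => H u (or_intror Hu))).
  rewrite S_INR. lra.
Qed.

Lemma fold_max_le (l : list R) (init b : R) :
  init <= b -> (forall x, In x l -> x <= b) -> fold_right Rmax init l <= b.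
Proof.
  induction l as [|x l IH]; simpl; intros Hinit Hl; auto.
  apply Rmax_lub; auto.
Qed.

Lemma gain_le_indic {O : Type} (A : O -> Prop) w u v c :
  0 <= c -> v - u <= c -> (A w <-> u <= v) -> Rmax u v - u <= c * indic A w.
Proof.
  intros Hc Hvu HA. destruct (Rle_dec u v) as [Huv|Hvu'].
  - rewrite Rmax_right, indic_in by (tauto || lra). lra.
  - rewrite Rmax_left, indic_out by (tauto || lra). lra.
Qed.

Definition improvement {Omega : Type} (k : nat) (n : nat -> nat) (xbar : nat -> R)
  (alpha i N : nat) (Y : nat -> Omega -> R) (w : Omega) : R :=
  fold_right Rmax (post_mean n xbar i N Y alpha w)
    (map (fun j => post_mean n xbar i N Y j w) (seq 0 k))
  - post_mean n xbar i N Y alpha w.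

Lemma blinkered_VOI_improvement {Omega : Type} (P : prob_space Omega) k n xbar alpha i N Y :
  blinkered_VOI P k n xbar alpha i N Y = Expect P (improvement k n xbar alpha i N Y).
Proof. reflexivity. Qed.

Section Arms.
Variable Omega : Type.
Variables (k : nat) (n : nat -> nat) (xbar : nat -> R) (alpha beta N : nat).
Variable Y : nat -> Omega -> R.
Hypothesis Hn : forall j, (j < k)%nat -> (1 <= n j)%nat.
Hypothesis Hx : forall j, (j < k)%nat -> 0 <= xbar j <= 1.
Hypothesis Hmax : xbar beta <= xbar alpha.
Hypothesis H2nd : forall j, (j < k)%nat -> j <> alpha -> xbar j <= xbar beta.
Hypothesis HYval : forall t, (t < N)%nat -> forall w, 0 <= Y t w <= 1.

Lemma sample_sum_range w :
  0 <= fold_right Rplus 0 (map (fun t => Y t w) (seq 0 N)) <= INR N.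
Proof.
  rewrite <- (length_seq N 0) at 3. apply sum_unit_interval.
  intros t Ht. apply in_seq in Ht. apply HYval. lia.
Qed.

Lemma count_ge_1 j : (j < k)%nat -> 1 <= INR (n j).
Proof. intro Hj. apply (le_INR 1), Hn, Hj. Qed.

(* Testing the leader: the only competitor is the runner-up beta. *)
Lemma improvement_test_leader_le (Hbeta : (beta < k)%nat) (Halpha : (alpha < k)%nat) w :
  improvement k n xbar alpha alpha N Y w <=
  INR N * xbar beta / INR (n alpha) *
  indic (fun w => updated_mean (n alpha) N (xbar alpha) Y w <= xbar beta) w.
Proof.
  set (U := updated_mean (n alpha) N (xbar alpha) Y w).
  assert (Halpha_post : post_mean n xbar alpha N Y alpha w = U)
    by (unfold post_mean; destruct Nat.eq_dec; [reflexivity | congruence]).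
  unfold improvement. rewrite Halpha_post.
  apply Rle_trans with (Rmax U (xbar beta) - U).
  - apply Rplus_le_compat_r, fold_max_le; [apply Rmax_l|].
    intros x Hin. apply in_map_iff in Hin. destruct Hin as [j [<- Hj]]. apply in_seq in Hj.
    unfold post_mean. destruct Nat.eq_dec as [->|Hne]; [apply Rmax_l|].
    eapply Rle_trans; [apply H2nd; auto; lia | apply Rmax_r].
  - pose proof (count_ge_1 alpha Halpha). pose proof (Hx beta Hbeta).
    pose proof (sample_sum_range w).
    apply gain_le_indic; [apply bound_nonneg; lra | | reflexivity].
    unfold U, updated_mean. rewrite plus_INR. apply updated_mean_drop; lra.
Qed.

(* Testing another arm i: its only competitor is the leader alpha. *)
Lemma improvement_test_other_le i (Hi : (i < k)%nat) (Hia : i <> alpha)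
  (Halpha : (alpha < k)%nat) w :
  improvement k n xbar alpha i N Y w <=
  INR N * (1 - xbar alpha) / INR (n i) *
  indic (fun w => xbar alpha <= updated_mean (n i) N (xbar i) Y w) w.
Proof.
  set (U := updated_mean (n i) N (xbar i) Y w).
  assert (Halpha_post : post_mean n xbar i N Y alpha w = xbar alpha)
    by (unfold post_mean; destruct Nat.eq_dec; congruence).
  unfold improvement. rewrite Halpha_post.
  apply Rle_trans with (Rmax (xbar alpha) U - xbar alpha).
  - apply Rplus_le_compat_r, fold_max_le; [apply Rmax_l|].
    intros x Hin. apply in_map_iff in Hin. destruct Hin as [j [<- Hj]]. apply in_seq in Hj.
    unfold post_mean. destruct Nat.eq_dec as [->|Hji]; [apply Rmax_r|].
    destruct (Nat.eq_dec j alpha) as [->|Hja]; [apply Rmax_l|].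
    apply Rle_trans with (xbar alpha); [|apply Rmax_l].
    eapply Rle_trans; [apply H2nd; auto; lia | exact Hmax].
  - pose proof (count_ge_1 i Hi). pose proof (Hx alpha Halpha).
    pose proof (sample_sum_range w). pose proof (H2nd i Hi Hia).
    apply gain_le_indic; [apply bound_nonneg; lra | | reflexivity].
    unfold U, updated_mean. rewrite plus_INR. apply updated_mean_rise; lra.
Qed.

End Arms.

Theorem mainTheorem1
  (Omega : Type) (P : prob_space Omega)
  (k : nat) (n : nat -> nat) (xbar : nat -> R) (alpha beta N : nat)
  (Y : nat -> Omega -> R)
  (Hk : (2 <= k)%nat)
  (Hn : forall j, (j < k)%nat -> (1 <= n j)%nat)
  (Hx : forall j, (j < k)%nat -> 0 <= xbar j <= 1)
  (Halpha : (alpha < k)%nat) (Hbeta : (beta < k)%nat) (Hab : alpha <> beta)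
  (Hmax : xbar beta <= xbar alpha)
  (H2nd : forall j, (j < k)%nat -> j <> alpha -> xbar j <= xbar beta)
  (HN : (1 <= N)%nat)
  (HYmeas : forall t, (t < N)%nat -> measurable_fun P (Y t))
  (HYval : forall t, (t < N)%nat -> forall w, 0 <= Y t w <= 1) :
  blinkered_VOI P k n xbar alpha alpha N Y
    <= INR N * xbar beta / INR (n alpha) *
       Pr P (fun w => updated_mean (n alpha) N (xbar alpha) Y w <= xbar beta)
  /\
  (forall i, (i < k)%nat -> i <> alpha ->
     blinkered_VOI P k n xbar alpha i N Y
       <= INR N * (1 - xbar alpha) / INR (n i) *
          Pr P (fun w => xbar alpha <= updated_mean (n i) N (xbar i) Y w)).
Proof.
  assert (HN0 : 0 <= INR N) by apply pos_INR.
  split.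
  - rewrite blinkered_VOI_improvement. apply Expect_le_mult_Pr.
    + pose proof (count_ge_1 k n Hn alpha Halpha). pose proof (Hx beta Hbeta).
      apply bound_nonneg; lra.
    + apply improvement_test_leader_le; auto.
  - intros i Hi Hia. rewrite blinkered_VOI_improvement. apply Expect_le_mult_Pr.
    + pose proof (count_ge_1 k n Hn i Hi). pose proof (Hx alpha Halpha).
      apply bound_nonneg; lra.
    + apply (improvement_test_other_le Omega k n xbar alpha beta); auto.
Qed.
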